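(* For $r>1$ and integer $N\ge1$, $$\eta(r,2,N)=\frac{1}{\sum_{i=0}^N\left(\frac{r}{r-1}\right)^i}<\frac{1}{N+1},$$ and $\lim_{r\to\infty}\eta(r,2,N)=\frac{1}{N+1}$.
   Context: Single item auction with $N$ buyers whose values are i.i.d., each taking values $0<x^1<\dots<x^K$ with probabilities $p^i>0$, $\sum_ip^i=1$. Let $z^i=(\sum_{j=1}^ip^j)^N-(\sum_{j=1}^{i-1}p^j)^N$ and reserve index $t(x,p)=\max\{i: i\in\arg\max_{1\le k\le K}x^k\sum_{j=k}^Kp^j\}$. The efficiency loss ratio of the welfare-maximizing revenue-optimal auction is $\mathrm{ELR}_N(x,p)=\sum_{i=1}^{t(x,p)-1}z^ix^i/\sum_{i=1}^Kz^ix^i$. $\eta(r,K,N)$ is the supremum of $\mathrm{ELR}_N(x,p)$ over all such $p$ and all $x$ with $0<x^1<\dots<x^K\le rx^1$. *)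

From HB Require Import structures.
From mathcomp Require Import all_boot all_order all_algebra.
From mathcomp Require Import all_classical all_reals all_analysis.
Set Implicit Arguments. Unset Strict Implicit. Unset Printing Implicit Defensive.
Import Order.TTheory GRing.Theory Num.Theory.
Local Open Scope classical_set_scope.
Local Open Scope ring_scope.

(* Values are indexed 0-based by 'I_K: x i, p i stand for x^{i+1}, p^{i+1}. *)
Section Auction.
Variable R : realType.

Definition zprob (K N : nat) (p : 'I_K -> R) (i : 'I_K) : R :=
  (\sum_(j < K | (j <= i)%N) p j) ^+ N - (\sum_(j < K | (j < i)%N) p j) ^+ N.

Definition revenue (K : nat) (x p : 'I_K -> R) (k : 'I_K) : R :=
  x k * \sum_(j < K | (k <= j)%N) p j.

(* 0-based reserve index: largest maximizer of revenue (t(x,p) - 1 in 1-based) *)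
Definition reserve0 (K : nat) (x p : 'I_K -> R) : nat :=
  \max_(i < K | [forall k : 'I_K, revenue x p k <= revenue x p i]) (i : nat).

Definition ELR (K N : nat) (x p : 'I_K -> R) : R :=
  (\sum_(i < K | (i < reserve0 x p)%N) zprob N p i * x i)
  / (\sum_(i < K) zprob N p i * x i).

Definition admissible (r : R) (K : nat) (x p : 'I_K -> R) : Prop :=
  (forall i, 0 < p i) /\ \sum_(i < K) p i = 1 /\
  (forall i : 'I_K, 0 < x i) /\
  (forall i j : 'I_K, (i < j)%N -> x i < x j) /\
  (forall i j : 'I_K, (j : nat) = 0%N -> x i <= r * x j).

Definition eta_ELR (r : R) (K N : nat) : R :=
  sup [set e | exists x p : 'I_K -> R, admissible r x p /\ e = ELR N x p].

End Auction.

From HB Require Import structures.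
From mathcomp Require Import all_boot all_order all_algebra.
From mathcomp Require Import all_classical all_reals all_analysis.
From mathcomp Require Import ring lra.
Set Implicit Arguments. Unset Strict Implicit. Unset Printing Implicit Defensive.
Import Order.TTheory GRing.Theory Num.Theory.
Local Open Scope classical_set_scope.
Local Open Scope ring_scope.

(* With two values x0 < x1 and mass q on x0, the loss is zero unless the
   reserve is x1, which happens iff x0 <= (1 - q) x1, and then
   ELR = q^N x0 / (q^N x0 + (1 - q^N) x1).  Since x1 <= r x0, that condition
   forces q s <= 1 for s = r / (r - 1), so
   (1 - q^N) x1 = (1 - q) x1 \sum_(i < N) q^i >= x0 \sum_(i < N) q^i
               >= x0 q^N \sum_(1 <= i <= N) s^i,
   i.e. ELR <= 1 / \sum_(i <= N) s^i, with equality at x = (1, r),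
   q = 1 - 1/r.  The supremum is thus attained, and tends to 1/(N+1) as s
   tends to 1. *)

Lemma big_ord2_cond (V : nmodType) (F : 'I_2 -> V) (P : pred 'I_2) :
  \sum_(i < 2 | P i) F i =
  (if P ord0 then F ord0 else 0) + (if P ord_max then F ord_max else 0).
Proof.
rewrite big_mkcond !big_ord_recl big_ord0 /= addr0.
by have -> : lift ord0 (ord0 : 'I_1) = ord_max :> 'I_2 by apply/val_inj.
Qed.

Lemma ord2P (i : 'I_2) : i = ord0 \/ i = ord_max.
Proof. by case: i => [[|[|//]] ?]; [left | right]; apply/val_inj. Qed.

Section GeometricBounds.
Variable R : realFieldType.
Implicit Types (q s : R) (n : nat).

Lemma subr1X q n : 1 - q ^+ n = (1 - q) * \sum_(i < n) q ^+ i.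
Proof. by rewrite -opprB subrX1 -mulNr opprB. Qed.

Lemma exprn_sumXS q s n : q ^+ n * \sum_(i < n) s ^+ i.+1 =
  \sum_(i < n) q ^+ (n - i.+1) * (q * s) ^+ i.+1.
Proof.
rewrite mulr_sumr; apply: eq_bigr => i _.
by rewrite exprMn mulrA -exprD subnK.
Qed.

Lemma sum_exprn_rev q n : \sum_(i < n) q ^+ i = \sum_(i < n) q ^+ (n - i.+1).
Proof. by rewrite (reindex_inj rev_ord_inj). Qed.

Lemma exprn_sumXS_le q s n : 0 <= q -> 0 <= s -> q * s <= 1 ->
  q ^+ n * \sum_(i < n) s ^+ i.+1 <= \sum_(i < n) q ^+ i.
Proof.
move=> q_ge0 s_ge0 qs_le1; rewrite exprn_sumXS sum_exprn_rev.
apply: ler_sum => i _; rewrite ler_piMr ?exprn_ge0 //.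
by rewrite exprn_ile1 ?mulr_ge0.
Qed.

Lemma exprn_sumXS_eq q s n : q * s = 1 ->
  q ^+ n * \sum_(i < n) s ^+ i.+1 = \sum_(i < n) q ^+ i.
Proof.
move=> qs1; rewrite exprn_sumXS sum_exprn_rev qs1.
by under eq_bigr do rewrite expr1n mulr1.
Qed.

Definition elr2 (N : nat) q (x0 x1 : R) : R :=
  q ^+ N * x0 / (q ^+ N * x0 + (1 - q ^+ N) * x1).

Lemma elr2_le N q s (x0 x1 : R) : 0 < q -> 0 <= s -> q * s <= 1 ->
  0 < x0 -> x0 <= (1 - q) * x1 ->
  elr2 N q x0 x1 <= (\sum_(i < N.+1) s ^+ i)^-1.
Proof.
move=> q_gt0 s_ge0 qs_le1 x0_gt0 x0_le.
set T := \sum_(i < N) s ^+ i.+1.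
have S_eq : \sum_(i < N.+1) s ^+ i = 1 + T by rewrite big_ord_recl expr0.
have T_ge0 : 0 <= T by rewrite sumr_ge0 // => i _; rewrite exprn_ge0.
have a_gt0 : 0 < q ^+ N * x0 by rewrite mulr_gt0 // exprn_gt0.
have b_ge : q ^+ N * x0 * T <= (1 - q ^+ N) * x1.
  rewrite subr1X mulrAC [X in X <= _]mulrC [X in _ <= X]mulrAC.
  apply: ler_pM => //; first exact: ltW.
    by rewrite mulr_ge0 // exprn_ge0 // ltW.
  exact: exprn_sumXS_le (ltW q_gt0) s_ge0 qs_le1.
have b_ge0 : 0 <= (1 - q ^+ N) * x1.
  by rewrite (le_trans _ b_ge) // mulr_ge0 // ltW.
rewrite /elr2 S_eq ler_pdivrMr ?ltr_wpDr // [leRHS]mulrC ler_pdivlMr ?ltr_wpDr //.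
by rewrite mulrDr mulr1 lerD2l.
Qed.

Lemma elr2_eq N q s (x0 x1 : R) : 0 < q -> q * s = 1 ->
  0 < x0 -> x0 = (1 - q) * x1 ->
  elr2 N q x0 x1 = (\sum_(i < N.+1) s ^+ i)^-1.
Proof.
move=> q_gt0 qs1 x0_gt0 x0_eq.
have s_gt0 : 0 < s by rewrite -(pmulr_rgt0 _ q_gt0) qs1.
set T := \sum_(i < N) s ^+ i.+1.
have T_ge0 : 0 <= T by rewrite sumr_ge0 // => i _; rewrite exprn_ge0 // ltW.
have b_eq : (1 - q ^+ N) * x1 = q ^+ N * x0 * T.
  by rewrite subr1X mulrAC -x0_eq -(exprn_sumXS_eq N qs1) mulrCA mulrA.
rewrite /elr2 big_ord_recl expr0 -/T b_eq -[X in X + _]mulr1 -mulrDr.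
rewrite invfM mulrA mulfV ?mul1r // mulf_neq0 ?gt_eqF ?exprn_gt0 //.
Qed.

Lemma sum_exprn_gt s n : 1 < s -> (0 < n)%N ->
  n.+1%:R < \sum_(i < n.+1) s ^+ i.
Proof.
move=> s_gt1 n_gt0; rewrite big_ord_recl expr0 -nat1r ltrD2l.
have -> : n%:R = \sum_(i < n) 1 :> R by rewrite sumr_const card_ord.
apply: ltr_sum => [|i _]; last by rewrite exprn_egt1.
by case: n n_gt0 => // n _; apply/hasP; exists ord0; rewrite ?mem_index_enum.
Qed.

Lemma reserve_bottom_mass_le r q x0 x1 : 1 < r -> 0 < 1 - q -> 0 < x0 ->
  x0 <= (1 - q) * x1 -> x1 <= r * x0 -> q * (r / (r - 1)) <= 1.
Proof.
move=> r_gt1 q_lt1 x0_gt0 x0_le x1_le.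
have rq_ge1 : 1 <= r * (1 - q) by nra.
by rewrite mulrA ler_pdivrMr ?subr_gt0 // mul1r; lra.
Qed.
End GeometricBounds.

Section RealLimits.
Variable R : realType.

Lemma sup_attained (E : set R) b : E b -> ubound E b -> sup E = b.
Proof.
move=> Eb ubEb; apply/le_anti/andP; split; first by apply: ge_sup => //; exists b.
by apply: ub_le_sup => //; exists b.
Qed.

Lemma cvg_sum_exprn T (F : set_system T) {FF : Filter F}
    (f : T -> R^o) (a : R^o) n :
  f t @[t --> F] --> a ->
  \sum_(i < n) f t ^+ i @[t --> F] --> \sum_(i < n) a ^+ i.
Proof.
move=> fa; apply: cvg_big => // [|i _]; first exact: add_continuous.
exact: (cvg_comp _ _ fa (@exprn_continuous R i a)).
Qed.

Lemma cvg_ratio_pred : r / (r - 1) @[r --> +oo] --> (1 : R^o).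
Proof.
have inv_cvg0 : (r - 1)^-1 @[r --> +oo] --> (0 : R^o).
  apply/gtr0_cvgV0; last exact: cvg_addrr.
  by near=> r; rewrite subr_gt0.
rewrite -[X in _ --> X]addr0.
apply: cvg_trans (cvgD (cvg_cst (1 : R^o)) inv_cvg0).
apply: near_eq_cvg; near=> r.
by rewrite /= -[X in X / _](subrK 1) mulrDl mulfV ?mul1r // subr_eq0 gt_eqF.
Unshelve. all: by end_near.
Qed.
End RealLimits.

Section TwoValues.
Variable R : realType.
Implicit Types (x p : 'I_2 -> R).

Lemma revenue_ord0 x p : revenue x p ord0 = x ord0 * (p ord0 + p ord_max).
Proof. by rewrite /revenue big_ord2_cond. Qed.

Lemma revenue_ord_max x p : revenue x p ord_max = x ord_max * p ord_max.
Proof. by rewrite /revenue big_ord2_cond /= add0r. Qed.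

Lemma reserve0_ord2 x p :
  reserve0 x p = (revenue x p ord0 <= revenue x p ord_max) :> nat.
Proof.
have max_ord_max : [forall k, revenue x p k <= revenue x p ord_max]
                   = (revenue x p ord0 <= revenue x p ord_max).
  apply/forallP/idP => [/(_ ord0) // | le01 k].
  by case: (ord2P k) => ->.
rewrite /reserve0 big_mkcond !big_ord_recl big_ord0 /=.
have -> : lift ord0 (ord0 : 'I_1) = ord_max :> 'I_2 by apply/val_inj.
by rewrite max_ord_max if_same max0n maxn0; case: ifP.
Qed.

Lemma ELR_ord2 N x p : (0 < N)%N -> p ord0 + p ord_max = 1 ->
  ELR N x p = if revenue x p ord0 <= revenue x p ord_max
              then elr2 N (p ord0) (x ord0) (x ord_max) else 0.
Proof.
move=> N_gt0 p_sum; rewrite /ELR reserve0_ord2.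
case: ifP => _; last by rewrite big_ord2_cond /= addr0 mul0r.
rewrite !big_ord2_cond /= /zprob !big_ord2_cond /= p_sum !addr0 expr1n.
by rewrite expr0n gtn_eqF // subr0.
Qed.

Lemma ELR_le_geometric N r x p : (0 < N)%N -> 1 < r -> admissible r x p ->
  ELR N x p <= (\sum_(i < N.+1) (r / (r - 1)) ^+ i)^-1.
Proof.
move=> N_gt0 r_gt1 [p_gt0 [p_sum [x_gt0 [_ x_le]]]].
have s_ge0 : 0 <= r / (r - 1).
  by rewrite divr_ge0 ?subr_ge0 ?ltW // (lt_trans ltr01).
have p_sum2 : p ord0 + p ord_max = 1 by rewrite -p_sum big_ord2_cond.
have q_compl : 1 - p ord0 = p ord_max by rewrite -p_sum2 addrAC subrr add0r.
rewrite ELR_ord2 //; case: ifP => [|_]; last first.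
  by rewrite invr_ge0 sumr_ge0 // => i _; rewrite exprn_ge0.
rewrite revenue_ord0 revenue_ord_max p_sum2 mulr1 -q_compl mulrC => rev_le.
have x1_le : x ord_max <= r * x ord0 by exact: x_le.
apply: elr2_le (reserve_bottom_mass_le r_gt1 _ _ rev_le x1_le) _ rev_le => //.
by rewrite q_compl.
Qed.

Lemma ELR_extremal N (r : R) : (0 < N)%N -> 1 < r ->
  exists x p : 'I_2 -> R, admissible r x p /\
    ELR N x p = (\sum_(i < N.+1) (r / (r - 1)) ^+ i)^-1.
Proof.
move=> N_gt0 r_gt1; have r_gt0 : 0 < r := lt_trans ltr01 r_gt1.
have rV_lt1 : r^-1 < 1 by rewrite invf_lt1.
pose x (i : 'I_2) := if i == ord0 then 1 else r.
pose p (i : 'I_2) := if i == ord0 then 1 - r^-1 else r^-1.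
have p_sum2 : p ord0 + p ord_max = 1 by rewrite /p /= subrK.
exists x, p; split.
  split; first by move=> i; case: (ord2P i) => ->; rewrite /p /= ?subr_gt0 ?invr_gt0.
  split; first by rewrite big_ord2_cond.
  split; first by move=> i; case: (ord2P i) => ->; rewrite /x /=.
  split; first by move=> i j; case: (ord2P i) => ->; case: (ord2P j) => ->.
  move=> i j /(@ord_inj 2 _ ord0) ->; rewrite /x /= mulr1.
  by case: ifP => _; [exact: ltW|].
rewrite ELR_ord2 // revenue_ord0 revenue_ord_max p_sum2 /x /p /=.
rewrite mulr1 mulfV ?gt_eqF // lexx.
apply: elr2_eq => //; first by rewrite subr_gt0.
  by field; rewrite subr_eq0 !gt_eqF.
by rewrite subKr mulVf ?gt_eqF.
Qed.

Lemma eta_ELR_ord2 N (r : R) : (0 < N)%N -> 1 < r ->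
  eta_ELR r 2 N = (\sum_(i < N.+1) (r / (r - 1)) ^+ i)^-1.
Proof.
move=> N_gt0 r_gt1; apply: sup_attained.
  by have [x [p [adm <-]]] := ELR_extremal N_gt0 r_gt1; exists x, p.
by move=> _ [x [p [adm ->]]]; exact: ELR_le_geometric.
Qed.

End TwoValues.

Theorem corollary1 (R : realType) (N : nat) (HN : (1 <= N)%N) :
  (forall r : R, 1 < r ->
     eta_ELR r 2 N = 1 / (\sum_(i < N.+1) (r / (r - 1)) ^+ i) /\
     eta_ELR r 2 N < 1 / (N.+1)%:R) /\
  eta_ELR r 2 N @[r --> +oo%R] --> ((N.+1)%:R^-1 : R^o).
Proof.
split.
  move=> r r_gt1; rewrite eta_ELR_ord2 // !div1r; split => //.
  have s_gt1 : 1 < r / (r - 1) by rewrite ltr_pdivlMr ?subr_gt0 // mul1r gtrBl.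
  have S_gt := sum_exprn_gt s_gt1 HN.
  by rewrite ltf_pV2 ?posrE ?ltr0n // (lt_trans _ S_gt).
have sum_cvg : \sum_(i < N.+1) (r / (r - 1)) ^+ i @[r --> +oo]
                --> (N.+1%:R : R^o).
  have sum1 : \sum_(i < N.+1) (1 : R) ^+ i = N.+1%:R.
    by under eq_bigr do rewrite expr1n; rewrite sumr_const card_ord.
  by rewrite -sum1; apply: cvg_sum_exprn; exact: cvg_ratio_pred.
have inv_cvg : (\sum_(i < N.+1) (r / (r - 1)) ^+ i)^-1 @[r --> +oo]
                --> (N.+1%:R^-1 : R^o).
  by apply: cvgV; rewrite ?pnatr_eq0.
apply: cvg_trans inv_cvg; apply: near_eq_cvg; near=> r.
by rewrite /= eta_ELR_ord2.
Unshelve. all: by end_near.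
Qed.
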